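(* Let $E$ be a real normed vector space, $C\subseteq E$ a nonempty closed convex set, $\phi\colon\mathbb{R}\to[0,+\infty]$ convex with $\phi(0)=0$, and $\psi\colon E\to(-\infty,+\infty]$ a $\phi$-convex function, real-valued on $C$ and $+\infty$ outside $C$. Assume $\partial\psi(C)=E^*$ or $C$ is compact; let $a\in C$, $a^\psi\in\partial\psi(a)$, with arbitrary predictions $\widehat{x}_t^*\in E^*$. (i) If $\theta_t=1$ for all $t$ (Optimistic Dual Averaging) and $\eta_1\geqslant\dots\geqslant\eta_{T+1}>0$, strategy S satisfies for all $z\in C$: \[\mathrm{Regret}(z,\dots,z)\leqslant\frac{1}{\eta_{T+1}}B_\psi(z,a^\psi)+\sum_{t=1}^T\frac{1}{\eta_t}\phi^\star\big(\eta_t\lVert x_t^*-\widehat{x}_t^*\rVert\big)-\sum_{t=1}^T\frac{1}{\eta_t}B_\psi\big(x_t,\widetilde{x}_t^\psi\big).\] (ii) If $\eta_t=1$ for all $t$ and $0<\theta_1\leqslant\dots\leqslant\theta_T$, strategy S satisfies for all $z\in C$: \[\mathrm{Regret}(z,\dots,z)\leqslant\frac{1}{\theta_1}B_\psi(z,a^\psi)+\sum_{t=1}^T\frac{1}{\theta_t}\phi^\star\big(\theta_t\lVert x_t^*-\widehat{x}_t^*\rVert\big)-\sum_{t=1}^T\frac{1}{\theta_t}B_\psi\big(x_t,\widetilde{x}_t^\psi\big).\]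
   Context: $E^*$ dual of $E$, $\langle\cdot,\cdot\rangle$ pairing, $\lVert\cdot\rVert$ norm/dual norm. $f^\star(x^* )=\sup_{x}(\langle x^*,x\rangle-f(x))$; $B_f(x,y^* )=f(x)+f^\star(y^* )-\langle y^*,x\rangle$; $\partial f(x)=\{x^*:B_f(x,x^* )=0\}$; $\partial f(C)=\bigcup_{x\in C}\partial f(x)$; $\partial\psi^\star(x^* ):=\arg\max_{x\in E}(\langle x^*,x\rangle-\psi(x))$. $\phi^\star$ is the Fenchel conjugate of $\phi$. $\psi$ is $\phi$-convex if $B_\psi(x,y^* )\geqslant\phi(\lVert x-y\rVert)$ for all $x\in E$ and all $y$, $y^*\in\partial\psi(y)$. Protocol: at rounds $t=1,\dots,T$ the learner chooses $x_t\in C$, the adversary reveals a proper $\varphi_t$ with $C\subseteq\operatorname{dom}\partial\varphi_t$, $x_t^*\in\partial\varphi_t(x_t)$; $\mathrm{Regret}(z_1,\dots,z_T)=\sum_t\varphi_t(x_t)-\sum_t\varphi_t(z_t)$. Strategy S with parameters $\eta_t,\theta_t>0$: $\widetilde{x}_t^\psi=a^\psi-\eta_t\sum_{i=1}^{t-1}\theta_ix_i^*$, $x_t\in\partial\psi^\star(\widetilde{x}_t^\psi-\eta_t\theta_t\widehat{x}_t^* )$. *)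

From HB Require Import structures.
From mathcomp Require Import all_boot all_order all_algebra.
From mathcomp Require Import all_classical all_reals all_analysis.
Set Implicit Arguments. Unset Strict Implicit. Unset Printing Implicit Defensive.
Import Order.TTheory GRing.Theory Num.Theory.
Import numFieldNormedType.Exports.
Local Open Scope classical_set_scope.
Local Open Scope ring_scope.

Section Defs.
Variables (R : realType) (E : normedModType R).

Definition is_dual (f : E -> R) : Prop :=
  (forall (a : R) (u v : E), f (a *: u + v) = a * f u + f v) /\ continuous f.

Definition dnorm (f : E -> R) : R :=
  sup [set `|f x| | x in [set x : E | `|x| <= 1]].

Definition fconj (f : E -> \bar R) (xs : E -> R) : \bar R :=
  ereal_sup [set ((xs x)%:E - f x)%E | x in [set: E]].

Definition breg (f : E -> \bar R) (x : E) (ys : E -> R) : \bar R :=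
  (f x + fconj f ys - (ys x)%:E)%E.

Definition subdiff (f : E -> \bar R) (x : E) : set (E -> R) :=
  [set xs | is_dual xs /\ breg f x xs = 0%E].

Definition subdiff_conj (f : E -> \bar R) (xs : E -> R) : set E :=
  [set x | forall y : E, ((xs y)%:E - f y <= (xs x)%:E - f x)%E].

Definition proper_fun (f : E -> \bar R) : Prop :=
  (forall x, f x != -oo%E) /\ exists x, f x \is a fin_num.

Definition convex_set_ (C : set E) : Prop :=
  forall x y (t : R), C x -> C y -> 0 <= t <= 1 -> C (t *: x + (1 - t) *: y).

Definition phi_convex (phi : R -> \bar R) (psi : E -> \bar R) : Prop :=
  forall (x y : E) ys, subdiff psi y ys -> (phi (`|x - y|)%R <= breg psi x ys)%E.

Definition xtilde (apsi : E -> R) (eta theta : nat -> R) (xs : nat -> E -> R)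
  (t : nat) : E -> R :=
  fun v => apsi v - eta t * \sum_(1 <= i < t) theta i * xs i v.

Definition strategyS (psi : E -> \bar R) (apsi : E -> R) (eta theta : nat -> R)
  (xhat : nat -> E -> R) (x : nat -> E) (xs : nat -> E -> R) (T : nat) : Prop :=
  forall t, (1 <= t <= T)%N ->
    subdiff_conj psi (fun v => xtilde apsi eta theta xs t v
                               - eta t * theta t * xhat t v) (x t).

Definition protocol (C : set E) (loss : nat -> E -> \bar R) (x : nat -> E)
  (xs : nat -> E -> R) (T : nat) : Prop :=
  forall t, (1 <= t <= T)%N ->
    [/\ C (x t), proper_fun (loss t),
        (forall y, C y -> exists ys, subdiff (loss t) y ys)
      & subdiff (loss t) (x t) (xs t)].

Definition regret (loss : nat -> E -> \bar R) (x : nat -> E) (z : E) (T : nat)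
  : \bar R :=
  (\sum_(1 <= t < T.+1) loss t (x t) - \sum_(1 <= t < T.+1) loss t z)%E.

End Defs.

Definition convex_ext {R : realType} (phi : R -> \bar R) : Prop :=
  forall (x y t : R), 0 <= t <= 1 ->
    (phi (t * x + (1 - t) * y)%R <= t%:E * phi x + (1 - t)%:E * phi y)%E.

Definition rconj {R : realType} (phi : R -> \bar R) (r : R) : \bar R :=
  ereal_sup [set ((r * s)%:E - phi s)%E | s in [set: R]].

From HB Require Import structures.
From mathcomp Require Import all_boot all_order all_algebra.
From mathcomp Require Import all_classical all_reals all_analysis.
From mathcomp Require Import ring lra zify.
Import Order.TTheory GRing.Theory Num.Theory.
Import numFieldNormedType.Exports.
Local Open Scope classical_set_scope.
Local Open Scope ring_scope.

Set Implicit Arguments. Unset Strict Implicit. Unset Printing Implicit Defensive.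

(* At round t, x_t maximises <g_t, .> - psi with g_t = xtilde_t - eta_t theta_t xhat_t^*, so g_t
   is a subgradient of psi at x_t. Replacing xhat_t^* by x_t^* and using phi-convexity of psi at
   x_t costs at most phi^*(eta_t theta_t ||x_t^* - xhat_t^*||) in psi^*(xtilde_t - eta_t theta_t
   x_t^* ). Together with the subgradient inequality for the loss this gives a per-round bound
   whose psi^*-terms telescope: in (i) because e |-> (psi^*(a^psi - e S) - psi^*(a^psi)) / e is
   nondecreasing, in (ii) by summation by parts against the nonnegative Fenchel-Young gaps
   psi^*(xtilde_t) - <xtilde_t, z> + psi(z). psi^* is finite on E^* because every dual element is
   a subgradient of psi or, when C is compact, because continuous linear forms are bounded on C. *)

Section RealSequences.
Variable R : realType.
Implicit Types f D th : nat -> R.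

Lemma nondecreasing_ge_first f m n :
  (forall t, (m <= t < n)%N -> f t <= f t.+1) ->
  forall t, (m <= t <= n)%N -> f m <= f t.
Proof.
move=> f_nondec t /andP[]; elim: t => [|t IH]; first by rewrite leqn0 => /eqP ->.
rewrite leq_eqVlt => /orP[/eqP <- // | mt tn].
by apply: le_trans (IH mt (ltnW tn)) (f_nondec t _); lia.
Qed.

Lemma nonincreasing_ge_last f m n :
  (forall t, (m <= t < n)%N -> f t.+1 <= f t) ->
  forall t, (m <= t <= n)%N -> f n <= f t.
Proof.
move=> f_noninc t /andP[mt]; elim: n f_noninc => [|n IH] f_noninc tn.
  by have -> : t = 0%N by lia.
move: tn; rewrite leq_eqVlt => /orP[/eqP -> // | tn].
apply: le_trans (f_noninc n _) (IH _ tn); first lia.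
by move=> s hs; apply: f_noninc; lia.
Qed.

Lemma sum_diff_div_le D th T :
  (forall t, (1 <= t <= T.+1)%N -> 0 <= D t) -> 0 < th 1%N ->
  (forall t, (1 <= t < T)%N -> th t <= th t.+1) ->
  \sum_(1 <= t < T.+1) (D t - D t.+1) / th t <= D 1%N / th 1%N.
Proof.
move=> D_ge0 th1_gt0 th_nondec.
have th_gt0 t : (1 <= t <= T)%N -> 0 < th t.
  by move=> ht; apply: lt_le_trans th1_gt0 (nondecreasing_ge_first th_nondec ht).
case: T D_ge0 th_nondec th_gt0 => [|n] D_ge0 th_nondec th_gt0.
  by rewrite big_geq // divr_ge0 ?D_ge0 ?ltW.
suff partial_le m : (m <= n)%N ->
    \sum_(1 <= t < m.+2) (D t - D t.+1) / th t <= D 1%N / th 1%N - D m.+2 / th m.+1.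
  have : 0 <= D n.+2 / th n.+1.
    by apply: divr_ge0; [apply: D_ge0 | apply: ltW; apply: th_gt0]; lia.
  by have := partial_le n (leqnn n); lra.
elim: m => [_|m IH mn]; first by rewrite big_nat1 mulrBl.
have weight_le : D m.+2 / th m.+2 <= D m.+2 / th m.+1.
  apply: ler_wpM2l; first by apply: D_ge0; lia.
  by rewrite lef_pV2 ?posrE; [apply: th_nondec | apply: th_gt0 | apply: th_gt0]; lia.
rewrite big_nat_recr //= mulrBl.
by have := IH (ltnW mn); lra.
Qed.

End RealSequences.

Section DualSpace.
Variables (R : realType) (E : normedModType R).
Implicit Types (f g : E -> R) (u v : E).

Lemma dual0 f : is_dual f -> f 0 = 0.
Proof.
move=> [f_lin _]; have := f_lin 1 0 0; rewrite scale1r addr0 mul1r => f00.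
by apply: (addrI (f 0)); rewrite addr0 -f00.
Qed.

Lemma dualZ f a u : is_dual f -> f (a *: u) = a * f u.
Proof. by move=> hf; have := hf.1 a u 0; rewrite !addr0 dual0 // addr0. Qed.

Lemma dualB f u v : is_dual f -> f (u - v) = f u - f v.
Proof.
by move=> hf; have := hf.1 1 u (- v); rewrite scale1r mul1r -scaleN1r dualZ // mulN1r.
Qed.

Lemma is_dual0 : is_dual (fun _ : E => 0 : R).
Proof. by split=> [a u v | x]; [rewrite mulr0 addr0 | exact: cvg_cst]. Qed.

Lemma is_dual_add f g : is_dual f -> is_dual g -> is_dual (fun v => f v + g v).
Proof.
move=> hf hg; split=> [a u v | x]; first by rewrite hf.1 hg.1; ring.
by apply: cvgD; [exact: hf.2 | exact: hg.2].
Qed.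

Lemma is_dual_sub f g : is_dual f -> is_dual g -> is_dual (fun v => f v - g v).
Proof.
move=> hf hg; split=> [a u v | x]; first by rewrite hf.1 hg.1; ring.
by apply: cvgB; [exact: hf.2 | exact: hg.2].
Qed.

Lemma is_dual_scale c g : is_dual g -> is_dual (fun v => c * g v).
Proof.
move=> hg; split=> [a u v | x]; first by rewrite hg.1; ring.
by apply: cvgM; [exact: cvg_cst | exact: hg.2].
Qed.

Lemma is_dual_sub_scale f g c :
  is_dual f -> is_dual g -> is_dual (fun v => f v - c * g v).
Proof. by move=> hf hg; apply: is_dual_sub => //; exact: is_dual_scale. Qed.

Lemma is_dual_sum (F : nat -> E -> R) m n :
  (forall i, (m <= i < n)%N -> is_dual (F i)) ->
  is_dual (fun v => \sum_(m <= i < n) F i v).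
Proof.
elim: n => [|n IH] hF.
  suff -> : (fun v => \sum_(m <= i < 0) F i v) = fun=> 0 by exact: is_dual0.
  by apply/funext => v; rewrite big_geq.
have [mn|nm] := leqP m n; last first.
  suff -> : (fun v => \sum_(m <= i < n.+1) F i v) = fun=> 0 by exact: is_dual0.
  by apply/funext => v; rewrite big_geq.
have -> : (fun v => \sum_(m <= i < n.+1) F i v) =
          (fun v => \sum_(m <= i < n) F i v + F n v).
  by apply/funext => v; rewrite big_nat_recr.
apply: is_dual_add; last by apply: hF; lia.
by apply: IH => i hi; apply: hF; lia.
Qed.

Lemma is_dual_xtilde (apsi : E -> R) (eta theta : nat -> R) (xs : nat -> E -> R) t :
  is_dual apsi -> (forall i, (1 <= i < t)%N -> is_dual (xs i)) ->
  is_dual (xtilde apsi eta theta xs t).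
Proof.
move=> hapsi hxs; apply: is_dual_sub_scale => //.
by apply: is_dual_sum => i hi; apply: is_dual_scale; exact: hxs.
Qed.

Lemma dual_unit_ball_bounded f : is_dual f ->
  exists M, forall x, `|x| <= 1 -> `|f x| <= M.
Proof.
move=> hf.
have := @cvgr_dist_lt _ _ _ (nbhs (0:E)) _ f (f 0) (hf.2 0) _ ltr01.
rewrite dual0 // => near0; have [d /= d_gt0 hd] := (nbhs_ballP _ _).1 (near0 _).
have d2_gt0 : 0 < d / 2 by rewrite divr_gt0.
exists (d / 2)^-1 => x x_le1.
have : ball (0:E) d ((d / 2) *: x).
  rewrite -ball_normE /= sub0r normrN normrZ gtr0_norm //.
  by apply: le_lt_trans (ler_wpM2l (ltW d2_gt0) x_le1) _; lra.
move=> /hd /=; rewrite sub0r normrN dualZ // normrM gtr0_norm // => lt1.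
by rewrite -(ler_pM2l d2_gt0) mulfV ?gt_eqF // ltW.
Qed.

Lemma dual_norm_le f x : is_dual f -> `|f x| <= dnorm f * `|x|.
Proof.
move=> hf; have [M hM] := dual_unit_ball_bounded hf.
have ub : has_ubound [set `|f y| | y in [set y : E | `|y| <= 1]].
  by exists M => _ [y /hM ? <-].
have [->|x_neq0] := eqVneq x 0; first by rewrite dual0 // !normr0 mulr0.
have nx_gt0 : 0 < `|x| by rewrite normr_gt0.
have -> : `|f x| = `|f (`|x|^-1 *: x)| * `|x|.
  by rewrite dualZ // normrM gtr0_norm ?invr_gt0 // mulrAC mulVf ?gt_eqF // mul1r.
rewrite ler_pM2r // /dnorm; apply: (ub_le_sup ub); exists (`|x|^-1 *: x) => //=.
by rewrite normrZ gtr0_norm ?invr_gt0 // mulVf ?gt_eqF.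
Qed.

End DualSpace.

Section Conjugates.
Variables (R : realType) (E : normedModType R).

Lemma fconj_ge (f : E -> \bar R) ys x : ((ys x)%:E - f x <= fconj f ys)%E.
Proof. by apply: ereal_sup_ubound; exists x. Qed.

Lemma rconj_ge (phi : R -> \bar R) r s : ((r * s)%:E - phi s <= rconj phi r)%E.
Proof. by apply: ereal_sup_ubound; exists s. Qed.

Lemma breg_eq0_fin (f : E -> \bar R) x ys :
  f x != -oo%E -> fconj f ys != -oo%E -> breg f x ys = 0%E ->
  [/\ f x \is a fin_num, fconj f ys \is a fin_num &
      fine (f x) + fine (fconj f ys) = ys x].
Proof.
rewrite /breg; case: (f x) => [r| |] //; case: (fconj f ys) => [s| |] //= _ _.
by move=> [] /eqP; rewrite subr_eq0 => /eqP.
Qed.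

Lemma subgradient_le (f : E -> \bar R) x z ys zs : proper_fun f ->
  subdiff f x ys -> subdiff f z zs ->
  [/\ f x \is a fin_num, f z \is a fin_num &
      fine (f x) - fine (f z) <= ys x - ys z].
Proof.
move=> [f_neqNy [x0 fx0_fin]] [_ bx] [_ bz].
have conj_neqNy w : fconj f w != -oo%E.
  by have := fconj_ge f w x0; rewrite -(fineK fx0_fin); case: (fconj f w).
have [fx_fin conj_fin conjE] := breg_eq0_fin (f_neqNy x) (conj_neqNy ys) bx.
have [fz_fin _ _] := breg_eq0_fin (f_neqNy z) (conj_neqNy zs) bz.
split=> //; have := fconj_ge f ys z.
by rewrite -(fineK fz_fin) -(fineK conj_fin) -EFinB lee_fin; lra.
Qed.

End Conjugates.

Lemma lee_EFinD_scale (R : realType) (k p q p' q' : R) (e : \bar R) : 0 < k ->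
  (p%:E <= q%:E + e)%E -> p' - q' <= k * (p - q) -> (p'%:E <= q'%:E + k%:E * e)%E.
Proof.
move=> k_gt0; case: e => [r| |] //=; last first.
  by move=> _ _; rewrite gt0_muley ?lte_fin // addey // leey.
rewrite -EFinD -EFinM -EFinD !lee_fin => pqr.
by have := ler_wpM2l (ltW k_gt0) pqr; lra.
Qed.

Lemma lee_sum_rounds (R : realType) T (L1 L2 B q : nat -> R) (e : nat -> \bar R) :
  (forall t, (1 <= t <= T)%N -> ((L1 t - L2 t + B t)%:E <= (q t)%:E + e t)%E) ->
  (\sum_(1 <= t < T.+1) (L1 t)%:E - \sum_(1 <= t < T.+1) (L2 t)%:E
     + \sum_(1 <= t < T.+1) (B t)%:E
   <= (\sum_(1 <= t < T.+1) q t)%:E + \sum_(1 <= t < T.+1) e t)%E.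
Proof.
move=> round_le; rewrite !sumEFin -EFinB -EFinD -sumrB -big_split /=.
rewrite -!sumEFin -big_split /= big_nat_cond [X in (_ <= X)%E]big_nat_cond.
by apply: lee_sum => t /andP[ht _]; exact: round_le.
Qed.

Section PhiConvexConjugate.
Variables (R : realType) (E : normedModType R) (C : set E) (psi : E -> \bar R).
Variables (a : E) (apsi : E -> R).
Hypothesis psi_fin : forall x, C x -> psi x \is a fin_num.
Hypothesis psi_out : forall x, ~ C x -> psi x = +oo%E.
Hypothesis psi_dom :
  (forall xs, is_dual xs -> exists2 x, C x & subdiff psi x xs) \/ compact C.
Hypothesis Ca : C a.
Hypothesis apsi_subdiff : subdiff psi a apsi.

Let apsi_dual : is_dual apsi := apsi_subdiff.1.

Lemma psi_neqNy x : psi x != -oo%E.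
Proof.
have [/psi_fin|/psi_out ->] := pselect (C x) => //.
by rewrite fin_numE => /andP[].
Qed.

Lemma fconj_psi_neqNy ys : fconj psi ys != -oo%E.
Proof.
by have := fconj_ge psi ys a; rewrite -(fineK (psi_fin Ca)); case: (fconj psi ys).
Qed.

Lemma fconj_psi_le ys r : (forall x, C x -> ys x - fine (psi x) <= r) ->
  (fconj psi ys <= r%:E)%E.
Proof.
move=> ys_le; apply: ge_ereal_sup => _ [x _ <-].
have [Cx|nCx] := pselect (C x); last by rewrite psi_out //= leNye.
by rewrite -(fineK (psi_fin Cx)) -EFinB lee_fin ys_le.
Qed.

Lemma fconj_psi_fin ys : is_dual ys -> fconj psi ys \is a fin_num.
Proof.
move=> ys_dual; case: psi_dom => [psi_onto | C_compact].
  have [x Cx [_ bx]] := psi_onto ys ys_dual.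
  by have [] := breg_eq0_fin (psi_neqNy x) (fconj_psi_neqNy ys) bx.
rewrite fin_numE fconj_psi_neqNy /=.
have [_ apsi_fin _] :=
  breg_eq0_fin (psi_neqNy a) (fconj_psi_neqNy apsi) apsi_subdiff.2.
have diff_cont := (is_dual_sub ys_dual apsi_dual).2.
have [M [_ M_bound]] :=
  compact_bounded (continuous_compact (continuous_subspaceT diff_cont) C_compact).
suff : (fconj psi ys <= (M + 1 + fine (fconj psi apsi))%:E)%E.
  by case: (fconj psi ys).
apply: fconj_psi_le => x Cx.
have : `|ys x - apsi x| <= M + 1 by apply: (M_bound (M + 1)); [lra | exists x].
have := fconj_ge psi apsi x.
rewrite -(fineK (psi_fin Cx)) -(fineK apsi_fin) -EFinB lee_fin ler_norml.
by move=> apsi_le /andP[_ diff_le]; lra.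
Qed.

(* [fine] loses nothing on E^*, where [fconj psi] is finite by [fconj_psi_fin]. *)
Definition psi_star ys := fine (fconj psi ys).

Lemma psi_starE ys : is_dual ys -> fconj psi ys = (psi_star ys)%:E.
Proof. by move=> ys_dual; rewrite /psi_star fineK // fconj_psi_fin. Qed.

Lemma psi_star_ge ys x : is_dual ys -> C x -> ys x - fine (psi x) <= psi_star ys.
Proof.
move=> ys_dual Cx; have := fconj_ge psi ys x.
by rewrite psi_starE // -(fineK (psi_fin Cx)) -EFinB lee_fin.
Qed.

Lemma psi_star_le ys r : is_dual ys ->
  (forall x, C x -> ys x - fine (psi x) <= r) -> psi_star ys <= r.
Proof. by move=> ys_dual /fconj_psi_le; rewrite psi_starE. Qed.

Lemma breg_psiE x ys : C x -> is_dual ys ->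
  breg psi x ys = (fine (psi x) + psi_star ys - ys x)%:E.
Proof. by move=> Cx ys_dual; rewrite /breg psi_starE // -(fineK (psi_fin Cx)). Qed.

Lemma psi_star_argmax ys p : is_dual ys -> C p -> subdiff_conj psi ys p ->
  psi_star ys = ys p - fine (psi p).
Proof.
move=> ys_dual Cp p_max; apply/le_anti/andP; split; last exact: psi_star_ge.
apply: psi_star_le => // x Cx; have := p_max x.
by rewrite -(fineK (psi_fin Cx)) -(fineK (psi_fin Cp)) -!EFinB lee_fin.
Qed.

Lemma subdiff_conj_subdiff ys p : is_dual ys -> C p -> subdiff_conj psi ys p ->
  subdiff psi p ys.
Proof.
move=> ys_dual Cp p_max; split=> //.
by rewrite breg_psiE // (psi_star_argmax ys_dual Cp p_max) (addrC (fine _)) subrK subrr.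
Qed.

(* Convexity of psi^* along the line e |-> y - e S, which passes through y at e = 0. *)
Lemma psi_star_slope_mono y S e' e : is_dual y -> is_dual S -> 0 < e' -> e' <= e ->
  (psi_star (fun v => y v - e' * S v) - psi_star y) / e' <=
  (psi_star (fun v => y v - e * S v) - psi_star y) / e.
Proof.
move=> y_dual S_dual e'_gt0 e'_le; have e_gt0 := lt_le_trans e'_gt0 e'_le.
set N := (_ - _) / e.
have NE : N * e = psi_star (fun v => y v - e * S v) - psi_star y.
  by rewrite /N divfK ?gt_eqF.
rewrite ler_pdivrMr // lerBlDr; apply: psi_star_le; first exact: is_dual_sub_scale.
move=> x Cx; have at0 := psi_star_ge y_dual Cx.
have := psi_star_ge (is_dual_sub_scale e y_dual S_dual) Cx => /= at_e.
nra.
Qed.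

Lemma optimistic_dual_averaging_sum_le T (eta : nat -> R) (xs : nat -> E -> R) z :
  (forall t, (1 <= t <= T)%N -> eta t.+1 <= eta t) -> 0 < eta T.+1 ->
  (forall t, (1 <= t <= T)%N -> is_dual (xs t)) -> C z ->
  \sum_(1 <= t < T.+1)
     ((psi_star (xtilde apsi eta (fun=> 1) xs t)
       - psi_star (fun v => xtilde apsi eta (fun=> 1) xs t v - eta t * xs t v)) / eta t
      - xs t z)
  <= (eta T.+1)^-1 * (fine (psi z) + psi_star apsi - apsi z).
Proof.
move=> eta_noninc etaT_gt0 xs_dual Cz.
have eta_gt0 t : (1 <= t <= T.+1)%N -> 0 < eta t.
  by move=> ht; apply: lt_le_trans etaT_gt0 (nonincreasing_ge_last (n := T.+1) eta_noninc ht).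
pose S t v := \sum_(1 <= i < t) xs i v.
have S_dual t : (t <= T.+1)%N -> is_dual (S t).
  by move=> tT; apply: is_dual_sum => i hi; apply: xs_dual; lia.
have yE t : xtilde apsi eta (fun=> 1) xs t = fun v => apsi v - eta t * S t v.
  by apply/funext => v; rewrite /xtilde /S; under eq_bigr do rewrite mul1r.
have yS t : (1 <= t)%N ->
    (fun v => apsi v - eta t * S t v - eta t * xs t v) = fun v => apsi v - eta t * S t.+1 v.
  by move=> t1; apply/funext => v; rewrite /S big_nat_recr //=; ring.
pose W t := (psi_star (fun v => apsi v - eta t * S t v) - psi_star apsi) / eta t.
apply: (@le_trans _ _ (\sum_(1 <= t < T.+1) (W t - W t.+1 - xs t z))).
  apply: ler_sum_nat => t /andP[t1 tT]; rewrite yE yS //.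
  have S'_dual : is_dual (S t.+1) by apply: S_dual.
  have eta'_gt0 : 0 < eta t.+1 by apply: eta_gt0; lia.
  have eta_le : eta t.+1 <= eta t by apply: eta_noninc; lia.
  have := psi_star_slope_mono apsi_dual S'_dual eta'_gt0 eta_le.
  by rewrite /W; lra.
have W1 : W 1%N = 0.
  rewrite /W (_ : (fun v => _) = apsi) ?subrr ?mul0r //.
  by apply/funext => v; rewrite /S big_geq // mulr0 subr0.
have WT : (apsi z - fine (psi z) - psi_star apsi) / eta T.+1 - S T.+1 z <= W T.+1.
  rewrite /W (ler_pdivlMr _ _ etaT_gt0) mulrBl divfK ?gt_eqF //.
  have := psi_star_ge (is_dual_sub_scale (eta T.+1) apsi_dual (S_dual _ (leqnn _))) Cz.
  by rewrite /=; lra.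
rewrite sumrB (@telescope_sumr_eq _ 1 T.+1 (fun t => - W t)) //; last by move=> t _; ring.
have -> : \sum_(1 <= t < T.+1) xs t z = S T.+1 z by [].
by rewrite W1; lra.
Qed.

Lemma nondecreasing_weights_sum_le T (theta : nat -> R) (xs : nat -> E -> R) z :
  0 < theta 1%N -> (forall t, (1 <= t < T)%N -> theta t <= theta t.+1) ->
  (forall t, (1 <= t <= T)%N -> is_dual (xs t)) -> C z ->
  \sum_(1 <= t < T.+1)
     ((psi_star (xtilde apsi (fun=> 1) theta xs t)
       - psi_star (fun v => xtilde apsi (fun=> 1) theta xs t v - theta t * xs t v))
        / theta t
      - xs t z)
  <= (theta 1%N)^-1 * (fine (psi z) + psi_star apsi - apsi z).
Proof.
move=> theta1_gt0 theta_nondec xs_dual Cz.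
have theta_gt0 t : (1 <= t <= T)%N -> 0 < theta t.
  by move=> ht; apply: lt_le_trans theta1_gt0 (nondecreasing_ge_first theta_nondec ht).
pose y t := xtilde apsi (fun=> 1) theta xs t.
have y_dual t : (t <= T.+1)%N -> is_dual (y t).
  by move=> tT; apply: is_dual_xtilde => // i hi; apply: xs_dual; lia.
have yS t : (1 <= t)%N -> (fun v => y t v - theta t * xs t v) = y t.+1.
  by move=> t1; apply/funext => v; rewrite /y /xtilde big_nat_recr //=; ring.
pose D t := psi_star (y t) - (y t z - fine (psi z)).
have -> : \sum_(1 <= t < T.+1)
     ((psi_star (y t) - psi_star (fun v => y t v - theta t * xs t v)) / theta t - xs t z)
   = \sum_(1 <= t < T.+1) (D t - D t.+1) / theta t.
  apply: eq_big_nat => t /andP[t1 tT]; rewrite /D yS //.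
  have -> : y t.+1 z = y t z - theta t * xs t z by rewrite -yS.
  by field; rewrite gt_eqF ?theta_gt0 //; lia.
have y1 : y 1%N = apsi.
  by apply/funext => v; rewrite /y /xtilde big_geq // mulr0 subr0.
have D_ge0 t : (1 <= t <= T.+1)%N -> 0 <= D t.
  by move=> /andP[_ tT]; rewrite /D subr_ge0; apply: psi_star_ge; [exact: y_dual|].
apply: le_trans (sum_diff_div_le D_ge0 theta1_gt0 theta_nondec) _.
by rewrite /D y1; lra.
Qed.

Variable phi : R -> \bar R.
Hypothesis phi_ge0 : forall s, (0 <= phi s)%E.
Hypothesis psi_phi_convex : phi_convex phi psi.

Lemma psi_star_step y u h lam p :
  is_dual y -> is_dual u -> is_dual h -> 0 < lam -> C p ->
  subdiff_conj psi (fun v => y v - lam * h v) p ->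
  ((psi_star (fun v => y v - lam * u v))%:E <=
   (y p - fine (psi p) - lam * u p)%:E + rconj phi (lam * dnorm (fun v => u v - h v))%R)%E.
Proof.
move=> y_dual u_dual h_dual lam_gt0 Cp p_max.
have g_dual := is_dual_sub_scale lam y_dual h_dual.
have g_star := psi_star_argmax g_dual Cp p_max.
have g_sub := subdiff_conj_subdiff g_dual Cp p_max.
have uh_dual := is_dual_sub u_dual h_dual.
set d := dnorm _.
rewrite -psi_starE; last exact: is_dual_sub_scale.
apply: ge_ereal_sup => _ [x _ <-].
have [Cx|nCx] := pselect (C x); last by rewrite psi_out //= leNye.
have := psi_phi_convex x g_sub; rewrite breg_psiE // g_star.
have := rconj_ge phi (lam * d) `|x - p|; have := phi_ge0 `|x - p|.
case: (phi `|x - p|) => [r| |] //= _ conj_ge; rewrite lee_fin => phi_le.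
apply: (le_trans _ (leeD2l _ conj_ge)).
rewrite -(fineK (psi_fin Cx)) -!EFinB -EFinD lee_fin.
have : `|(u x - h x) - (u p - h p)| <= d * `|x - p|.
  by have := dual_norm_le (x - p) uh_dual; rewrite (dualB x p uh_dual).
move=> /lerNnormlW /(ler_wpM2l (ltW lam_gt0)) dist_le.
lra.
Qed.

(* [lam t] stands for [eta t * theta t]; keeping it abstract lets (i) and (ii) use
   [eta] and [theta] themselves as step sizes. *)
Lemma strategyS_regret_le T (eta theta lam : nat -> R) (xhat : nat -> E -> R)
    (loss : nat -> E -> \bar R) (x : nat -> E) (xs : nat -> E -> R) z :
  (forall t, (1 <= t <= T)%N -> lam t = eta t * theta t) ->
  (forall t, (1 <= t <= T)%N -> 0 < lam t) ->
  (forall t, (1 <= t <= T)%N -> is_dual (xhat t)) ->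
  protocol C loss x xs T -> strategyS psi apsi eta theta xhat x xs T -> C z ->
  (regret loss x z T
   + \sum_(1 <= t < T.+1) (lam t)^-1%:E * breg psi (x t) (xtilde apsi eta theta xs t)
   <= (\sum_(1 <= t < T.+1)
         ((psi_star (xtilde apsi eta theta xs t)
           - psi_star (fun v => xtilde apsi eta theta xs t v - lam t * xs t v)) / lam t
          - xs t z))%:E
      + \sum_(1 <= t < T.+1) (lam t)^-1%:E
          * rconj phi (lam t * dnorm (fun v => xs t v - xhat t v))%R)%E.
Proof.
move=> lamE lam_gt0 xhat_dual play strat Cz.
pose y t := xtilde apsi eta theta xs t.
have xs_dual t : (1 <= t <= T)%N -> is_dual (xs t) by move=> /play[_ _ _ []].
have y_dual t : (1 <= t <= T)%N -> is_dual (y t).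
  by move=> ht; apply: is_dual_xtilde => // i hi; apply: xs_dual; lia.
have round t : (1 <= t <= T)%N ->
  [/\ loss t (x t) \is a fin_num, loss t z \is a fin_num &
    ((fine (loss t (x t)) - fine (loss t z)
      + (lam t)^-1 * (fine (psi (x t)) + psi_star (y t) - y t (x t)))%:E
     <= ((psi_star (y t) - psi_star (fun v => y t v - lam t * xs t v)) / lam t
         - xs t z)%:E
        + (lam t)^-1%:E * rconj phi (lam t * dnorm (fun v => xs t v - xhat t v))%R)%E].
  move=> ht; have [Cxt loss_proper loss_subdiff xt_subdiff] := play t ht.
  have [zs zs_subdiff] := loss_subdiff z Cz.
  have [Lx_fin Lz_fin L_le] := subgradient_le loss_proper xt_subdiff zs_subdiff.
  have xt_max : subdiff_conj psi (fun v => y t v - lam t * xhat t v) (x t).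
    by rewrite lamE //; exact: strat.
  have step := psi_star_step (y_dual t ht) (xs_dual t ht) (xhat_dual t ht)
    (lam_gt0 t ht) Cxt xt_max.
  split=> //; apply: lee_EFinD_scale step _; first by rewrite invr_gt0 lam_gt0.
  have : (lam t)^-1 * (lam t * xs t (x t)) = xs t (x t).
    by rewrite mulrA mulVf ?mul1r // gt_eqF ?lam_gt0.
  lra.
rewrite /regret.
have -> : \sum_(1 <= t < T.+1) loss t (x t) = \sum_(1 <= t < T.+1) (fine (loss t (x t)))%:E.
  by apply: eq_big_nat => t /round[? _ _]; rewrite fineK.
have -> : \sum_(1 <= t < T.+1) loss t z = \sum_(1 <= t < T.+1) (fine (loss t z))%:E.
  by apply: eq_big_nat => t /round[_ ? _]; rewrite fineK.
have -> : (\sum_(1 <= t < T.+1) (lam t)^-1%:E * breg psi (x t) (y t) =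
    \sum_(1 <= t < T.+1) ((lam t)^-1 * (fine (psi (x t)) + psi_star (y t) - y t (x t)))%:E)%E.
  apply: eq_big_nat => t ht; have [Cxt _ _ _] := play t ht.
  by rewrite breg_psiE //; exact: y_dual.
by apply: lee_sum_rounds => t /round[].
Qed.

End PhiConvexConjugate.

Theorem corollary3 (R : realType) (E : normedModType R) (C : set E)
  (phi : R -> \bar R) (psi : E -> \bar R) (a : E) (apsi : E -> R) :
  C !=set0 -> closed C -> convex_set_ C ->
  convex_ext phi -> phi 0 = 0%E -> (forall s, (0 <= phi s)%E) ->
  phi_convex phi psi ->
  (forall x, C x -> psi x \is a fin_num) ->
  (forall x, ~ C x -> psi x = +oo%E) ->
  ((forall xs, is_dual xs -> exists2 x, C x & subdiff psi x xs) \/ compact C) ->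
  C a -> subdiff psi a apsi ->
  (* (i) Optimistic Dual Averaging: theta_t = 1 *)
  (forall (T : nat) (eta : nat -> R) (xhat : nat -> E -> R)
      (loss : nat -> E -> \bar R) (x : nat -> E) (xs : nat -> E -> R),
    (forall t, (1 <= t <= T)%N -> eta t.+1 <= eta t) -> 0 < eta T.+1 ->
    (forall t, (1 <= t <= T)%N -> is_dual (xhat t)) ->
    protocol C loss x xs T ->
    strategyS psi apsi eta (fun _ => 1%R) xhat x xs T ->
    forall z, C z ->
      (regret loss x z T
       + \sum_(1 <= t < T.+1) (eta t)^-1%:E
           * breg psi (x t) (xtilde apsi eta (fun _ => 1%R) xs t)
       <= (eta T.+1)^-1%:E * breg psi z apsi
          + \sum_(1 <= t < T.+1) (eta t)^-1%:E
              * rconj phi (eta t * dnorm (fun v => xs t v - xhat t v))%R)%E)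
  /\
  (* (ii) eta_t = 1, nondecreasing theta *)
  (forall (T : nat) (theta : nat -> R) (xhat : nat -> E -> R)
      (loss : nat -> E -> \bar R) (x : nat -> E) (xs : nat -> E -> R),
    0 < theta 1%N -> (forall t, (1 <= t < T)%N -> theta t <= theta t.+1) ->
    (forall t, (1 <= t <= T)%N -> is_dual (xhat t)) ->
    protocol C loss x xs T ->
    strategyS psi apsi (fun _ => 1%R) theta xhat x xs T ->
    forall z, C z ->
      (regret loss x z T
       + \sum_(1 <= t < T.+1) (theta t)^-1%:E
           * breg psi (x t) (xtilde apsi (fun _ => 1%R) theta xs t)
       <= (theta 1%N)^-1%:E * breg psi z apsi
          + \sum_(1 <= t < T.+1) (theta t)^-1%:E
              * rconj phi (theta t * dnorm (fun v => xs t v - xhat t v))%R)%E).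
Proof.
move=> _ _ _ _ _ phi_ge0 psi_phi_convex psi_fin psi_out psi_dom Ca apsi_subdiff.
have regret_le := strategyS_regret_le psi_fin psi_out psi_dom Ca apsi_subdiff
  phi_ge0 psi_phi_convex.
have oda_sum_le := optimistic_dual_averaging_sum_le psi_fin psi_out psi_dom Ca apsi_subdiff.
have weights_sum_le := nondecreasing_weights_sum_le psi_fin psi_out psi_dom Ca apsi_subdiff.
have bregzE z : C z -> breg psi z apsi = (fine (psi z) + psi_star psi apsi - apsi z)%:E.
  move=> Cz; rewrite (breg_psiE psi_fin psi_out psi_dom Ca apsi_subdiff) //.
  exact: apsi_subdiff.1.
split=> [T eta xhat loss x xs eta_noninc etaT_gt0 xhat_dual play strat z Cz
        |T theta xhat loss x xs theta1_gt0 theta_nondec xhat_dual play strat z Cz].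
- have eta_gt0 t : (1 <= t <= T)%N -> 0 < eta t.
    move=> ht; apply: lt_le_trans etaT_gt0 _.
    by apply: (nonincreasing_ge_last (n := T.+1) eta_noninc); lia.
  apply: le_trans (regret_le T eta _ eta _ _ _ _ z _ eta_gt0 xhat_dual play strat Cz) _.
    by move=> t _; rewrite mulr1.
  rewrite bregzE // -EFinM leeD2r // lee_fin.
  by apply: oda_sum_le => // t /play[_ _ _ []].
- have theta_gt0 t : (1 <= t <= T)%N -> 0 < theta t.
    by move=> ht; apply: lt_le_trans theta1_gt0 (nondecreasing_ge_first theta_nondec ht).
  apply: le_trans (regret_le T _ theta theta _ _ _ _ z _ theta_gt0 xhat_dual play strat Cz) _.
    by move=> t _; rewrite mul1r.
  rewrite bregzE // -EFinM leeD2r // lee_fin.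
  by apply: weights_sum_le => // t /play[_ _ _ []].
Qed.
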